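(* Let $R_4,R_3,R_2,R_1$ be four runs that lie consecutively in $\{1,\dots,n\}$ in this left-to-right order, with no gaps between them. Let $p_4=P(R_4,R_3)$, $p_3=P(R_3,R_2)$ and $p_2=P(R_2,R_1)$, and suppose $p_3>p_2$ and $p_3\ge p_4$. Let $R'=R_3\cup R_2$. Then $P(R',R_1)=p_2$ and $P(R_4,R')=p_4$.
   Context: Assume $n=2^a-1$ for an integer $a\ge1$. Each index $j\in\{1,\dots,n\}$ has power $\mathrm{pow}(j)=a-1-\nu_2(j)$, where $\nu_2(j)$ is the exponent of $2$ in $j$. Equivalently, $\mathrm{pow}(j)$ is the depth of node $j$ in the perfect binary tree on $\{1,\dots,n\}$ in in-order, so the center has power $0$. A run is a nonempty set of consecutive indices $\{s,\dots,e\}$, and its midpoint is $\mathrm{mid}=(s+e)/2$. For a run $R$ and the run $R'$ immediately to its right, the power of $R$ (relative to $R'$) is $P(R,R')=\min\{\mathrm{pow}(j): j\in\mathbb{Z},\ \mathrm{mid}(R)\le j\le \mathrm{mid}(R')\}$. The integers $j$ in this range form the power interval of $R$. *)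

From mathcomp Require Import all_boot.
Set Implicit Arguments. Unset Strict Implicit. Unset Printing Implicit Defensive.

(* n = 2^a - 1. Power of index j (1 <= j <= n): a - 1 - nu_2(j),
   where nu_2(j) = logn 2 j (the 2-adic valuation, for j > 0). *)
Definition pow (a j : nat) : nat := a - 1 - logn 2 j.

(* A run {s,...,e} (nonempty, s <= e) is represented by the pair (s, e). *)
Definition run := (nat * nat)%type.

Definition mid2 (R : run) : nat := R.1 + R.2.

(* The power interval of R relative to R': integers j with
   mid(R) <= j <= mid(R'), i.e. 2j >= s+e and 2j <= s'+e'. *)
Definition in_power_interval (R R' : run) (j : nat) : bool :=
  (mid2 R <= j.*2) && (j.*2 <= mid2 R').

(* The integers in the interval
   all lie in [0, mid2 R'], so we range j over 0 <= j <= mid2 R'.  The neutral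
   element a is never attained: pow a j <= a - 1 and the interval is nonempty
   for adjacent runs. *)
Definition P (a : nat) (R R' : run) : nat :=
  \big[minn/a]_(0 <= j < (mid2 R').+1 | in_power_interval R R' j) pow a j.

From mathcomp Require Import all_boot.
From mathcomp Require Import zify.
Set Implicit Arguments. Unset Strict Implicit. Unset Printing Implicit Defensive.

(* Only the shape of the power intervals matters, not the values of [pow].
   Merging R3 and R2 moves the left end of the interval of R2 leftwards to
   mid(R'), which lies between mid(R3) and mid(R2); so the new interval is
   squeezed between the interval of R2 and the union of the intervals of R3
   and R2, giving p2 <= P(R',R1) <= min(p3, p2) = p2.  Symmetrically the
   interval of R4 is stretched from mid(R3) to mid(R'), which lies between
   mid(R3) and mid(R2), giving p4 <= P(R4,R') <= min(p4, p3) = p4. *)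

Lemma bigmin_leq (x : nat) (r : seq nat) (Q : pred nat) (F : nat -> nat) j :
  j \in r -> Q j -> \big[minn/x]_(i <- r | Q i) F i <= F j.
Proof.
elim: r => [//|y r IH]; rewrite inE big_cons => /orP [/eqP -> ->|jr Qj].
  exact: geq_minl.
case: (Q y); last exact: IH.
exact: leq_trans (geq_minr _ _) (IH jr Qj).
Qed.

Lemma P_leq_pow a R S j : in_power_interval R S j -> P a R S <= pow a j.
Proof.
move=> Ij; apply: bigmin_leq => //; rewrite mem_iota /=.
by move: Ij => /andP [_]; lia.
Qed.

Lemma leq_P a R S x : x <= a ->
  (forall j, in_power_interval R S j -> x <= pow a j) -> x <= P a R S.
Proof.
move=> xa xpow; apply: (big_ind (fun y => x <= y)) => //.
by move=> u v xu xv; rewrite leq_min xu xv.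
Qed.

Lemma P_leq_a a R S : P a R S <= a.
Proof.
apply: (big_ind (fun y => y <= a)) => //.
- by move=> u v ua _; apply: leq_trans (geq_minl _ _) ua.
- by move=> j _; rewrite /pow; lia.
Qed.

Lemma P_widen a R S R' S' :
  mid2 R' <= mid2 R -> mid2 S <= mid2 S' -> P a R' S' <= P a R S.
Proof.
move=> RR' SS'; apply: leq_P => [|j /andP [Rj jS]]; first exact: P_leq_a.
by apply: P_leq_pow; apply/andP; lia.
Qed.

Lemma P_split a R T S :
  mid2 R <= mid2 T -> mid2 T <= mid2 S ->
  minn (P a R T) (P a T S) <= P a R S.
Proof.
move=> RT TS; apply: leq_P => [|j /andP [Rj jS]].
  exact: leq_trans (geq_minl _ _) (P_leq_a _ _ _).
case: (leqP j.*2 (mid2 T)) => jT.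
- by apply: leq_trans (geq_minl _ _) _; apply: P_leq_pow; apply/andP.
- by apply: leq_trans (geq_minr _ _) _; apply: P_leq_pow; apply/andP; lia.
Qed.

Theorem mainTheorem4 (a s4 e4 e3 e2 e1 : nat) :
  1 <= a ->
  1 <= s4 -> s4 <= e4 -> e4 < e3 -> e3 < e2 -> e2 < e1 -> e1 <= 2 ^ a - 1 ->
  let R4 : run := (s4, e4) in
  let R3 : run := (e4.+1, e3) in
  let R2 : run := (e3.+1, e2) in
  let R1 : run := (e2.+1, e1) in
  let p4 := P a R4 R3 in
  let p3 := P a R3 R2 in
  let p2 := P a R2 R1 in
  p3 > p2 -> p3 >= p4 ->
  let R' : run := (e4.+1, e2) in
  P a R' R1 = p2 /\ P a R4 R' = p4.
Proof.
move=> _ _ le44 lt43 lt32 lt21 _ R4 R3 R2 R1 p4 p3 p2 lt_p23 le_p43 R'.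
have [m43 m3' m'2 m21] : [/\ mid2 R4 <= mid2 R3, mid2 R3 <= mid2 R',
  mid2 R' <= mid2 R2 & mid2 R2 <= mid2 R1] by rewrite /mid2 /=; split; lia.
have p3_R'R2 : p3 <= P a R' R2 by apply: P_widen.
have p3_R3R' : p3 <= P a R3 R' by apply: P_widen.
split; apply/eqP; rewrite eqn_leq; apply/andP; split.
- by apply: P_widen.
- apply: leq_trans _ (P_split a m'2 m21).
  by rewrite leq_min (ltnW (leq_trans lt_p23 p3_R'R2)) leqnn.
- by apply: P_widen.
- apply: leq_trans _ (P_split a m43 m3').
  by rewrite leq_min leqnn (leq_trans le_p43 p3_R3R').
Qed.
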